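(* For $2\le n\le l\le\infty$, the quotient morphism of dg algebras $\Phi_{l,n}\colon\mathcal C_l\to\mathcal C_n$ is a quasi-isomorphism, i.e. it induces an isomorphism on cohomology with respect to $\delta_0$ in every bidegree.
   Context: $R$ is a commutative unital ring. $\mathcal C_\infty=R\langle d_1,d_2,\dots\rangle$ is the free bigraded associative unital $R$-algebra on generators $d_i$ ($i\ge1$) of bidegree $(-i,1-i)$. For $k\ge1$ let $S_k=\sum_{i+j=k,\ i,j\ge1}(-1)^{i+1}d_id_j$ (so $S_1=0$). $\delta_0$ is the unique derivation of bidegree $(0,1)$ with $\delta_0(d_i)=S_i$ for all $i\ge1$, satisfying the graded Leibniz rule $\delta_0(xy)=\delta_0(x)y+(-1)^{x_2}x\delta_0(y)$ for $x$ of bidegree $(x_1,x_2)$; it satisfies $\delta_0^2=0$. For $n\ge1$, $I_n$ is the two-sided ideal generated by $S_k$ and $d_k$ for all $k\ge n$ (it is $\delta_0$-stable), $I_\infty=0$, and $\mathcal C_n=(\mathcal C_\infty/I_n,\delta_0)$. For $1\le n\le l\le\infty$, $I_l\subseteq I_n$ and $\Phi_{l,n}\colon\mathcal C_l\to\mathcal C_n$ is the induced surjection. *)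

From mathcomp Require Import all_boot all_order all_algebra.
Set Implicit Arguments. Unset Strict Implicit. Unset Printing Implicit Defensive.
Import GRing.Theory.
Local Open Scope ring_scope.

(* The free associative unital R-algebra C_oo = R<d_1, d_2, ...>.           *)
(* A word in the generators is a [seq nat]; the letter [a : nat] stands for *)
(* the generator d_(a+1)  (so every letter is a generator d_i with i >= 1). *)
(* An element of C_oo is represented by a finite formal list of terms       *)
(* (coefficient, word); two representatives denote the same element iff    *)
(* they have the same coefficient function [coef].                          *)

Section FreeAlg.
Variable R : comPzRingType.

Definition ncpoly := seq (R * seq nat).

Definition coef (x : ncpoly) (w : seq nat) : R :=
  \sum_(t <- x | t.2 == w) t.1.

Definition nceq (x y : ncpoly) : Prop := forall w, coef x w = coef y w.

Definition nczero : ncpoly := [::].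
Definition ncadd (x y : ncpoly) : ncpoly := x ++ y.
Definition ncopp (x : ncpoly) : ncpoly := [seq (- t.1, t.2) | t <- x].
Definition ncsub (x y : ncpoly) : ncpoly := ncadd x (ncopp y).
Definition ncmul (x y : ncpoly) : ncpoly :=
  [seq (t.1 * s.1, t.2 ++ s.2) | t <- x, s <- y].
Definition ncsum (xs : seq ncpoly) : ncpoly := flatten xs.

Definition dgen (i : nat) : ncpoly := [:: (1, [:: i.-1])].

(* S_k = sum_{i+j=k, i,j>=1} (-1)^(i+1) d_i d_j   (so S_1 = 0) *)
Definition Sgen (k : nat) : ncpoly :=
  [seq ((-1) ^+ i.+1, [:: i.-1; (k - i).-1]) | i <- iota 1 k.-1].

(* Bidegree: d_i has bidegree (-i, 1-i); for a word this is additive. *)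
Definition bideg (w : seq nat) : int * int :=
  (- (Posz (sumn w + size w)), - (Posz (sumn w))).

Definition homog (p q : int) (x : ncpoly) : Prop :=
  forall w, coef x w != 0 -> bideg w = (p, q).

(* delta_0 on a word d_{i_1} ... d_{i_m}: by the graded Leibniz rule,
   sum_k (-1)^(x_2 of d_{i_1}...d_{i_(k-1)}) d_{i_1}..d_{i_(k-1)} S_{i_k} d_{i_(k+1)}..d_{i_m}.
   The second degree of the prefix take k w is -(sumn (take k w)). *)
Definition delta0_word (w : seq nat) : ncpoly :=
  flatten [seq [seq ((-1) ^+ (sumn (take k w)) * t.1,
                     take k w ++ t.2 ++ drop k.+1 w)
               | t <- Sgen (nth 0 w k).+1]
          | k <- iota 0 (size w)].

(* delta_0 : the R-linear extension (the unique derivation with d_i |-> S_i) *)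
Definition delta0 (x : ncpoly) : ncpoly :=
  flatten [seq [seq (t.1 * s.1, s.2) | s <- delta0_word t.2] | t <- x].

(* Levels n in {1, 2, ..., oo}: [Some n] is n, [None] is oo. *)
Definition level := option nat.

Definition level_le (n l : level) : bool :=
  match n, l with
  | _, None => true
  | None, Some _ => false
  | Some a, Some b => (a <= b)%N
  end.

Definition geq_level (k : nat) (n : level) : bool :=
  if n is Some m then (m <= k)%N else false.

(* Membership in the two-sided ideal I_n generated by S_k and d_k, k >= n:
   x is a finite sum of terms u * g * v with g = S_k or g = d_k, k >= n.
   For n = oo there are no generators, so I_oo = 0. *)
Definition inI (n : level) (x : ncpoly) : Prop :=
  exists gs : seq (ncpoly * (bool * nat) * ncpoly),
    all (fun g => geq_level g.1.2.2 n) gs /\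
    nceq x (ncsum [seq ncmul (ncmul g.1.1 (if g.1.2.1 then Sgen g.1.2.2
                                           else dgen g.1.2.2)) g.2 | g <- gs]).

(* C_n = (C_oo / I_n, delta_0).  An element of C_n in bidegree (p,q) is
   represented by a homogeneous x in C_oo of that bidegree.
   Cocycles and coboundaries of C_n, read on representatives: *)
Definition cocycle (n : level) (p q : int) (x : ncpoly) : Prop :=
  homog p q x /\ inI n (delta0 x).

Definition coboundary (n : level) (p q : int) (x : ncpoly) : Prop :=
  homog p q x /\ exists y, homog p (q - 1) y /\ inI n (ncsub x (delta0 y)).

(* Phi_{l,n} : C_l -> C_n (induced by identity of C_oo) induces a bijection
   H^{p,q}(C_l) -> H^{p,q}(C_n), [x] |-> [x]. *)
Definition Phi_cohomology_bijective (l n : level) (p q : int) : Prop :=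
  (forall b, cocycle n p q b ->
     exists a, cocycle l p q a /\ coboundary n p q (ncsub a b)) /\
  (forall a, cocycle l p q a -> coboundary n p q a -> coboundary l p q a).

End FreeAlg.

(* The map h sending d_1 d_(b+1) v to d_(b+2) v, and every other word to 0, is a
   contracting homotopy: delta0 h + h delta0 = id - pi, where pi projects onto the
   span of the words 1 and d_1, on which delta0 vanishes.  For n >= 2, h maps each
   u S_k v and u d_k v (k >= n) back into I_n, so the homotopy descends to every C_n;
   and I_n has no component on 1 or d_1, all its generators having weight >= 2.
   Hence every class of C_n is represented by its projection under pi, which does
   not depend on n and is a coboundary in C_n only when it is already zero. *)

From mathcomp Require Import all_boot all_order all_algebra.
From mathcomp Require Import ring zify.
Set Implicit Arguments. Unset Strict Implicit. Unset Printing Implicit Defensive.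
Import GRing.Theory.
Local Open Scope ring_scope.

Section Cohomology.
Variable R : comPzRingType.
Implicit Types (x y z g : ncpoly R) (u v w r : seq nat) (F H : seq nat -> R) (c : R) (n : level).

Definition lin F x : R := \sum_(t <- x) t.1 * F t.2.

Definition kron w u : R := (u == w)%:R.

Definition ncbind (f : seq nat -> ncpoly R) x : ncpoly R :=
  flatten [seq [seq (t.1 * s.1, s.2) | s <- f t.2] | t <- x].

Lemma coefE x w : coef x w = lin (kron w) x.
Proof.
rewrite /coef /lin big_mkcond /=; apply: eq_bigr => t _.
by rewrite /kron; case: (t.2 == w); rewrite ?mulr1 ?mulr0.
Qed.

Lemma lin_nil F : lin F [::] = 0.
Proof. by rewrite /lin big_nil. Qed.

Lemma lin_cons F t x : lin F (t :: x) = t.1 * F t.2 + lin F x.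
Proof. by rewrite /lin big_cons. Qed.

Lemma lin_cat F x y : lin F (x ++ y) = lin F x + lin F y.
Proof. by rewrite /lin big_cat. Qed.

Lemma lin_flatten F (L : seq (ncpoly R)) : lin F (flatten L) = \sum_(x <- L) lin F x.
Proof. by rewrite /lin big_flatten. Qed.

Lemma lin_opp F x : lin F (ncopp x) = - lin F x.
Proof. by rewrite /lin /ncopp big_map -sumrN; apply: eq_bigr => t _; rewrite mulNr. Qed.

Lemma lin_bind F f x : lin F (ncbind f x) = lin (fun u => lin F (f u)) x.
Proof.
rewrite /ncbind lin_flatten /lin big_map; apply: eq_bigr => t _.
by rewrite big_map mulr_sumr; apply: eq_bigr => s _; rewrite mulrA.
Qed.

Lemma lin_ncmul F x y : lin F (ncmul x y) = lin (fun u => lin (fun v => F (u ++ v)) y) x.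
Proof.
rewrite /lin /ncmul big_allpairs_dep; apply: eq_bigr => t _; rewrite mulr_sumr.
by apply: eq_bigr => s _; rewrite mulrA.
Qed.

Lemma eq_lin F H x : F =1 H -> lin F x = lin H x.
Proof. by move=> FH; apply: eq_bigr => t _; rewrite FH. Qed.

Lemma lin0 F x : F =1 (fun=> 0) -> lin F x = 0.
Proof. by move=> F0; rewrite (eq_lin _ F0) /lin big1 // => t _; rewrite mulr0. Qed.

Lemma linB F H x : lin F x - lin H x = lin (fun u => F u - H u) x.
Proof. by rewrite /lin -sumrB; apply: eq_bigr => t _; rewrite mulrBr. Qed.

Lemma linD F H x : lin F x + lin H x = lin (fun u => F u + H u) x.
Proof. by rewrite /lin -big_split; apply: eq_bigr => t _; rewrite mulrDr. Qed.

Lemma lin_coef F x (s : seq (seq nat)) :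
  uniq s -> {subset map snd x <= s} -> lin F x = \sum_(u <- s) coef x u * F u.
Proof.
move=> s_uniq; elim: x => [|t x IH] x_s.
  by rewrite lin_nil big1 // => u _; rewrite coefE lin_nil mul0r.
rewrite lin_cons IH; last by move=> u xu; apply: x_s; rewrite inE xu orbT.
have t_s : t.2 \in s by apply: x_s; rewrite inE eqxx.
have coef_cons u : coef (t :: x) u * F u = t.1 * (kron u t.2 * F u) + coef x u * F u.
  by rewrite !coefE lin_cons mulrDl mulrA.
rewrite (eq_bigr _ (fun u _ => coef_cons u)) big_split /= -mulr_sumr; congr (_ + _).
rewrite (bigD1_seq t.2) //= /kron eqxx mul1r big1 ?addr0 // => u /negbTE tu.
by rewrite eq_sym tu mul0r.
Qed.

Lemma lin_nceq F x y : nceq x y -> lin F x = lin F y.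
Proof.
move=> xy; pose s := undup (map snd x ++ map snd y).
have s_uniq : uniq s by rewrite undup_uniq.
rewrite (@lin_coef F x s) //; last by move=> u xu; rewrite mem_undup mem_cat xu.
rewrite (@lin_coef F y s) //; last by move=> u yu; rewrite mem_undup mem_cat yu orbT.
by apply: eq_bigr => u _; rewrite xy.
Qed.

Lemma nceq_lin x y : (forall w, lin (kron w) x = lin (kron w) y) -> nceq x y.
Proof. by move=> xy w; rewrite !coefE. Qed.

Lemma nceq_sym x y : nceq x y -> nceq y x.
Proof. by move=> xy w; rewrite xy. Qed.

Lemma nceq_trans x y z : nceq x y -> nceq y z -> nceq x z.
Proof. by move=> xy yz w; rewrite xy yz. Qed.

Lemma coef_opp x w : coef (ncopp x) w = - coef x w.
Proof. by rewrite !coefE lin_opp. Qed.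

Lemma coef_sub x y w : coef (ncsub x y) w = coef x w - coef y w.
Proof. by rewrite !coefE /ncsub /ncadd lin_cat lin_opp. Qed.

Definition ideal_gen (b : bool) k : ncpoly R := if b then Sgen R k else dgen R k.

Definition sandwich c u g r : ncpoly R := ncmul (ncmul [:: (c, u)] g) [:: (1, r)].

Lemma lin_sandwich F c u g r :
  lin F (sandwich c u g r) = c * lin (fun v => F (u ++ v ++ r)) g.
Proof.
rewrite /sandwich !lin_ncmul lin_cons lin_nil addr0 /=; congr (_ * _).
by apply: eq_lin => v; rewrite lin_cons lin_nil addr0 mul1r catA.
Qed.

Lemma ncmul_sandwiches x g y :
  nceq (ncmul (ncmul x g) y) (flatten [seq sandwich (t.1 * s.1) t.2 g s.2 | t <- x, s <- y]).
Proof.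
apply: nceq_lin => w; rewrite lin_flatten big_allpairs_dep !lin_ncmul {1}/lin.
apply: eq_bigr => t _; under eq_bigr do rewrite lin_sandwich.
rewrite /lin; under [RHS]eq_bigr do rewrite mulr_sumr.
rewrite [RHS]exchange_big mulr_sumr; apply: eq_bigr => a _.
rewrite !mulr_sumr; apply: eq_bigr => s _; rewrite catA; ring.
Qed.

Lemma inI_nceq n x y : inI n x -> nceq x y -> inI n y.
Proof. by move=> [gs [gs_n x_gs]] xy; exists gs; split=> // w; rewrite -xy. Qed.

Lemma inI_nil n : inI n ([::] : ncpoly R).
Proof. by exists [::]. Qed.

Lemma inI_cat n x y : inI n x -> inI n y -> inI n (x ++ y).
Proof.
move=> [gx [gx_n x_gx]] [gy [gy_n y_gy]]; exists (gx ++ gy).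
split; first by rewrite all_cat gx_n gy_n.
by move=> w; rewrite /ncsum map_cat flatten_cat !coefE !lin_cat -!coefE x_gx y_gy.
Qed.

Lemma inI_flatten n (L : seq (ncpoly R)) : {in L, forall x, inI n x} -> inI n (flatten L).
Proof.
elim: L => [|x L IH] L_n /=; first exact: inI_nil.
apply: inI_cat; first by apply: L_n; rewrite inE eqxx.
by apply: IH => x' x'L; apply: L_n; rewrite inE x'L orbT.
Qed.

Lemma inI_opp n x : inI n x -> inI n (ncopp x).
Proof.
move=> [gs [gs_n x_gs]]; exists [seq (ncopp e.1.1, e.1.2, e.2) | e <- gs]; split.
  by rewrite all_map; apply: sub_all gs_n => e.
apply: nceq_lin => w; rewrite lin_opp -coefE x_gs coefE /ncsum !lin_flatten !big_map -sumrN.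
by apply: eq_bigr => e _; rewrite !lin_ncmul lin_opp.
Qed.

Lemma inI_sandwich n b k c u r : geq_level k n -> inI n (sandwich c u (ideal_gen b k) r).
Proof.
move=> k_n; exists [:: ([:: (c, u)], (b, k), [:: (1, r)])]; split; first by rewrite /= k_n.
by move=> w; rewrite /ncsum /= cats0.
Qed.

Lemma level_le_trans m n l : level_le m n -> level_le n l -> level_le m l.
Proof. by case: m n l => [a|] [b|] [c|] //=; apply: leq_trans. Qed.

Lemma geq_level_gt1 n k : level_le (Some 2%N) n -> geq_level k n -> (1 < k)%N.
Proof. by case: n => //= m; apply: leq_trans. Qed.

Lemma geq_levelS n k : geq_level k n -> geq_level k.+1 n.
Proof. by case: n => //= m /leqW. Qed.

Lemma lin_Sgen F k :
  lin F (Sgen R k) = \sum_(i <- iota 1 k.-1) (-1) ^+ i.+1 * F [:: i.-1; (k - i).-1].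
Proof. by rewrite /lin /Sgen big_map. Qed.

Lemma delta0E x : delta0 x = ncbind (delta0_word R) x.
Proof. by []. Qed.

Lemma delta0_word_cons a r :
  delta0_word R (a :: r) =
  [seq (t.1, t.2 ++ r) | t <- Sgen R a.+1] ++
  [seq ((-1) ^+ a * t.1, a :: t.2) | t <- delta0_word R r].
Proof.
rewrite /delta0_word /= (iotaDl 1 0) -map_comp /= drop0; congr (_ ++ _).
  by apply: eq_map => t; rewrite expr0 mul1r.
rewrite map_flatten -map_comp; congr flatten; apply: eq_map => k /=.
by rewrite -map_comp; apply: eq_map => t /=; rewrite exprD mulrA.
Qed.

Lemma lin_delta0_word_cons F a r :
  lin F (delta0_word R (a :: r)) =
  lin (fun v => F (v ++ r)) (Sgen R a.+1) + (-1) ^+ a * lin (fun v => F (a :: v)) (delta0_word R r).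
Proof.
rewrite delta0_word_cons lin_cat /lin !big_map mulr_sumr; congr (_ + _).
by apply: eq_bigr => t _; rewrite mulrA.
Qed.

Lemma coef_delta0_opp x w : coef (delta0 (ncopp x)) w = - coef (delta0 x) w.
Proof. by rewrite !coefE delta0E !lin_bind lin_opp. Qed.

(* sumn w + size w is the weight -p of w; the short words are 1 and d_1. *)
Definition short w := (sumn w + size w <= 1)%N.

Definition hword w : ncpoly R := if w is 0%N :: b :: r then [:: (1, b.+1 :: r)] else [::].
Definition proj_word w : ncpoly R :=
  match w with [::] | [:: 0%N] => [:: (1, w)] | _ => [::] end.

Definition hmap x := ncbind hword x.
Definition proj x := ncbind proj_word x.

Definition hcoef w v : R := lin (kron w) (hword v).

Lemma hcoef_d1 w b v : hcoef w [:: 0%N, b & v] = kron w (b.+1 :: v).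
Proof. by rewrite /hcoef lin_cons lin_nil mul1r addr0. Qed.

Lemma hcoef_succ w a v : hcoef w (a.+1 :: v) = 0.
Proof. exact: lin_nil. Qed.

Lemma coef_hmap x w : coef (hmap x) w = lin (hcoef w) x.
Proof. by rewrite coefE lin_bind. Qed.

Lemma hcoef_Sgen w k r : lin (fun v => hcoef w (v ++ r)) (Sgen R k.+2) = kron w (k.+1 :: r).
Proof.
rewrite lin_Sgen /= big_cons (iotaDl 2 0) big_map big1 => [|j _]; last first.
  by rewrite add2n hcoef_succ mulr0.
by rewrite addr0 hcoef_d1 expr2 mulN1r opprK mul1r.
Qed.

Lemma hcoef_d1_Sgen w k r :
  lin (fun v => hcoef w (0%N :: v ++ r)) (Sgen R k.+1) =
  kron w [:: 0%N, k & r] - lin (fun v => kron w (v ++ r)) (Sgen R k.+2).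
Proof.
have iota1S : iota 1 k.+1 = 1%N :: map (addn 1) (iota 1 k) by rewrite -iotaDl.
rewrite !lin_Sgen [in RHS]iota1S big_cons big_map /=.
rewrite expr2 mulN1r opprK mul1r opprD addrA subrr add0r -sumrN.
rewrite !big_seq; apply: eq_bigr => i; rewrite mem_iota => /andP [i_gt0 _].
by rewrite hcoef_d1 prednK // add1n add0n subSS !exprS; ring.
Qed.

Lemma homotopy_word u w :
  lin (fun v => lin (kron w) (delta0_word R v)) (hword u) + lin (hcoef w) (delta0_word R u) =
  kron w u - lin (kron w) (proj_word u).
Proof.
case: u => [|[|a] r].
- by rewrite /= !lin_nil lin_cons lin_nil /=; ring.
- case: r => [|b r].
    by rewrite /= lin_nil lin_delta0_word_cons !lin_nil mulr0 lin_cons lin_nil /=; ring.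
  rewrite /= lin_cons lin_nil mul1r addr0 lin_nil subr0 !lin_delta0_word_cons.
  by rewrite hcoef_d1_Sgen (eq_lin _ (hcoef_d1 w b)) lin_nil exprS; ring.
- rewrite /= !lin_nil add0r subr0 lin_delta0_word_cons hcoef_Sgen.
  by rewrite (lin0 _ (hcoef_succ w a)) mulr0 addr0.
Qed.

Lemma homotopy x w :
  coef x w - coef (proj x) w = coef (delta0 (hmap x)) w + coef (hmap (delta0 x)) w.
Proof.
rewrite !coefE delta0E /hmap /proj !lin_bind linB linD.
by apply: eq_lin => u; rewrite -homotopy_word.
Qed.

Lemma hmap_nceq x y : nceq x y -> nceq (hmap x) (hmap y).
Proof. by move=> xy w; rewrite !coef_hmap; apply: lin_nceq. Qed.

Lemma hmap_flatten (L : seq (ncpoly R)) :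
  nceq (hmap (flatten L)) (flatten [seq hmap x | x <- L]).
Proof.
move=> w; rewrite coef_hmap coefE !lin_flatten big_map.
by apply: eq_bigr => x _; rewrite -coefE coef_hmap.
Qed.

Lemma coef_hmap_sandwich c u g r w :
  coef (hmap (sandwich c u g r)) w = c * lin (fun v => hcoef w (u ++ v ++ r)) g.
Proof. by rewrite coef_hmap lin_sandwich. Qed.

Lemma hmap_sandwich n b k c u r :
  level_le (Some 2%N) n -> geq_level k n -> inI n (hmap (sandwich c u (ideal_gen b k) r)).
Proof.
move=> n_ge2 k_n; have := geq_level_gt1 n_ge2 k_n.
case: k k_n => [|[|k]] // k_n _.
case: u => [|[|a] u].
- case: b.
  + apply: inI_nceq (inI_sandwich false c [::] r k_n) _ => w.
    by rewrite coef_hmap_sandwich hcoef_Sgen coefE lin_sandwich lin_cons lin_nil /=; ring.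
  + exact: inI_nil.
- case: u => [|b' u].
  + case: b.
    * apply: inI_nceq (inI_cat (inI_sandwich true (- c) [::] r (geq_levelS k_n))
                               (inI_sandwich false c [:: 0%N] r k_n)) _ => w.
      rewrite coef_hmap_sandwich hcoef_d1_Sgen coefE lin_cat !lin_sandwich.
      by rewrite /ideal_gen /dgen /= lin_cons lin_nil /=; ring.
    * apply: inI_nceq (inI_sandwich false c [::] r (geq_levelS k_n)) _ => w.
      by rewrite coef_hmap_sandwich coefE lin_sandwich !lin_cons !lin_nil /= hcoef_d1.
  + apply: inI_nceq (inI_sandwich b c (b'.+1 :: u) r k_n) _ => w.
    by rewrite coef_hmap_sandwich coefE lin_sandwich (eq_lin _ (fun v => hcoef_d1 w b' _)).
- apply: inI_nceq (inI_nil n) _ => w.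
  by rewrite coefE lin_nil coef_hmap_sandwich (lin0 _ (fun v => hcoef_succ w a _)) mulr0.
Qed.

Lemma inI_hmap n x : level_le (Some 2%N) n -> inI n x -> inI n (hmap x).
Proof.
move=> n_ge2 [gs [gs_n x_gs]].
apply: inI_nceq (nceq_sym (nceq_trans (hmap_nceq x_gs) (hmap_flatten _))).
apply: inI_flatten => _ /mapP [_ /mapP [[[y [b k]] z] e_gs ->] ->] /=.
have k_n : geq_level k n by apply: (allP gs_n _ e_gs).
apply: inI_nceq (nceq_sym (nceq_trans (hmap_nceq (ncmul_sandwiches y _ z)) (hmap_flatten _))).
apply: inI_flatten => _ /mapP [_ /allpairsP [[t s] [_ _ ->]] ->].
exact: hmap_sandwich.
Qed.

Lemma shortP w : short w -> w = [::] \/ w = [:: 0%N].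
Proof.
case: w => [|[|a] [|b w]] w_short; [by left | by right | exfalso..];
  by move: w_short; rewrite /short /=; lia.
Qed.

Lemma short_infix a v b : short (a ++ v ++ b) -> short v.
Proof. by rewrite /short !sumn_cat !size_cat; lia. Qed.

Lemma long_not_short v : (1 < size v)%N -> ~~ short v.
Proof. by rewrite /short; lia. Qed.

Lemma kron_short w v : short w -> ~~ short v -> kron w v = 0.
Proof. by rewrite /kron; case: eqP => // -> ->. Qed.

Lemma lin_proj_word F u : lin F (proj_word u) = if short u then F u else 0.
Proof.
case: ifPn => [/shortP [] -> | u_long]; try by rewrite lin_cons lin_nil mul1r addr0.
by case: u u_long => [|[|a] [|b u]] //= _; rewrite lin_nil.
Qed.

Lemma coef_proj x w : coef (proj x) w = if short w then coef x w else 0.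
Proof.
rewrite !coefE lin_bind; case: ifPn => w_short.
  by apply: eq_lin => u; rewrite lin_proj_word; case: ifPn => // /(kron_short w_short) ->.
apply: lin0 => u; rewrite lin_proj_word; case: ifPn => // u_short.
by rewrite /kron; case: eqP => // uw; rewrite -uw u_short in w_short.
Qed.

Lemma delta0_proj x : nceq (delta0 (proj x)) [::].
Proof.
move=> w; rewrite coefE delta0E !lin_bind coefE lin_nil; apply: lin0 => u.
by rewrite lin_proj_word; case: ifP => // /shortP [] ->; apply: lin_nil.
Qed.

Lemma lin_delta0_word_long F u :
  (forall v, (1 < size v)%N -> F v = 0) -> lin F (delta0_word R u) = 0.
Proof.
elim: u F => [|a u IH] F F_long; first exact: lin_nil.
rewrite lin_delta0_word_cons IH ?mulr0 ?addr0 => [|v v_long]; last exact/F_long/leqW.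
by rewrite lin_Sgen big1 // => i _; rewrite F_long ?mulr0 // size_cat.
Qed.

Lemma coef_delta0_short y w : short w -> coef (delta0 y) w = 0.
Proof.
move=> w_short; rewrite coefE delta0E lin_bind; apply: lin0 => u.
by apply: lin_delta0_word_long => v /long_not_short; apply: kron_short.
Qed.

Lemma lin_ideal_gen_long F b k :
  (1 < k)%N -> (forall v, ~~ short v -> F v = 0) -> lin F (ideal_gen b k) = 0.
Proof.
move=> k_gt1 F_long; case: b => /=.
  by rewrite lin_Sgen big1 // => i _; rewrite F_long ?mulr0 //; apply: long_not_short.
rewrite lin_cons lin_nil F_long ?mulr0 ?addr0 //.
by rewrite /short /=; lia.
Qed.

Lemma coef_inI_short n z w : level_le (Some 2%N) n -> inI n z -> short w -> coef z w = 0.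
Proof.
move=> n_ge2 [gs [gs_n z_gs]] w_short.
rewrite z_gs coefE lin_flatten big_map big_seq big1 // => -[[y [b k]] y'] e_gs.
have k_gt1 := geq_level_gt1 n_ge2 (allP gs_n _ e_gs).
rewrite !lin_ncmul; apply: lin0 => a; rewrite (lin_ideal_gen_long _ k_gt1) // => v v_long.
apply: lin0 => s; apply: (kron_short w_short); apply: contra v_long.
by rewrite -catA; apply: short_infix.
Qed.

Lemma homog_opp p q x : homog p q x -> homog p q (ncopp x).
Proof. by move=> x_pq w; rewrite coef_opp oppr_eq0; apply: x_pq. Qed.

Lemma homog_sub p q x y : homog p q x -> homog p q y -> homog p q (ncsub x y).
Proof.
move=> x_pq y_pq w; rewrite coef_sub.
by have [x0 | /x_pq //] := eqVneq (coef x w) 0; rewrite x0 sub0r oppr_eq0 => /y_pq.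
Qed.

Lemma homog_proj p q x : homog p q x -> homog p q (proj x).
Proof. by move=> x_pq w; rewrite coef_proj; case: ifP => _; [apply: x_pq | rewrite eqxx]. Qed.

Lemma hcoefE w u : hcoef w u = if w is c.+1 :: r then kron [:: 0%N, c & r] u else 0.
Proof.
by case: u => [|[|a] [|b u]]; case: w => [|[|c] r];
  rewrite /hcoef /= ?lin_cons ?lin_nil /kron /= ?mul1r ?addr0.
Qed.

Lemma coef_hmapE x w : coef (hmap x) w = if w is c.+1 :: r then coef x [:: 0%N, c & r] else 0.
Proof.
rewrite coef_hmap (eq_lin _ (hcoefE w)).
by case: w => [|[|c] r]; rewrite ?coefE //; apply: lin0.
Qed.

Lemma homog_hmap p q x : homog p q x -> homog p (q - 1) (hmap x).
Proof.
move=> x_pq [|[|c] r]; rewrite coef_hmapE ?eqxx // => /x_pq.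
rewrite /bideg /= => -[<- <-]; congr (_, _).
  by rewrite !addSn !addnS add0n.
by rewrite add0n addSn -addn1 PoszD opprD.
Qed.

Lemma cocycle_homotopy n x : level_le (Some 2%N) n -> inI n (delta0 x) ->
  inI n (ncsub (ncsub x (proj x)) (delta0 (hmap x))).
Proof.
move=> n_ge2 dx_n; apply: inI_nceq (inI_hmap n_ge2 dx_n) _ => w.
by rewrite !coef_sub homotopy; ring.
Qed.

End Cohomology.

Theorem mainTheorem11 (R : comPzRingType) (n l : level) :
  level_le (Some 2%N) n -> level_le n l ->
  forall p q : int, Phi_cohomology_bijective R l n p q.
Proof.
move=> n_ge2 n_le_l p q.
have l_ge2 := level_le_trans n_ge2 n_le_l.
split.
- move=> b [b_pq db_n]; exists (proj b); split.
    split; first exact: homog_proj.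
    exact: inI_nceq (inI_nil _ l) (nceq_sym (delta0_proj b)).
  split; first exact: homog_sub (homog_proj b_pq) b_pq.
  exists (ncopp (hmap b)); split; first exact/homog_opp/homog_hmap.
  apply: inI_nceq (inI_opp (cocycle_homotopy n_ge2 db_n)) _ => w.
  by rewrite coef_opp !coef_sub coef_delta0_opp; ring.
- move=> a [a_pq da_l] [_ [y [y_pq ady_n]]]; split=> //.
  exists (hmap a); split; first exact: homog_hmap.
  apply: inI_nceq (cocycle_homotopy l_ge2 da_l) _ => w.
  rewrite !coef_sub coef_proj; case: ifP => [w_short|]; last by rewrite subr0.
  have := coef_inI_short n_ge2 ady_n w_short.
  by rewrite coef_sub coef_delta0_short // subr0 => ->; rewrite subr0.
Qed.
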